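(* Let $\Lambda>0$, $e>0$, $\phi_h>0$, and let $f:[0,\phi_h]\to(0,1]$ be strictly concave, strictly decreasing and differentiable with $f(0)=1$. Assume $2e/\Lambda\in f([0,\phi_h])$ and set $\underline{\phi}:=f^{-1}(2e/\Lambda)$, and let $\phi_{fp}:=\arg\max_{\phi\in[0,\phi_h]} f(\phi)\phi$. Define the limit matching revenue $$\tilde{\mathcal M}(\phi)=\begin{cases} e\phi & \text{if } \frac{e}{(\Lambda/2) f(\phi)}<1,\\ \frac{\Lambda}{2}f(\phi)\phi & \text{otherwise,}\end{cases}\qquad \phi\in[0,\phi_h].$$ Then $\tilde{\mathcal M}$ has a unique maximizer on $[0,\phi_h]$, given by $\phi^*=\max\{\phi_{fp},\underline{\phi}\}$. Moreover, for $\beta>0$ let $$\mathcal M(\phi;\beta)=\frac{\Lambda}{2}f(\phi)\phi\,\bigl(1-\mathcal D(\phi;\beta)\bigr),\qquad \mathcal D(\phi;\beta)=\Bigl(\sum_{n=0}^\infty \frac{e^n}{\prod_{a=1}^n\bigl(\frac{\Lambda}{2}f(\phi)+a\beta\bigr)}\Bigr)^{-1};$$ then for any sequence $\beta_n\downarrow 0$ and any choice of maximizers $\phi_n^*\in\arg\max_{\phi\in[0,\phi_h]}\mathcal M(\phi;\beta_n)$, there is a subsequence of $(\phi_n^* )$ converging to $\phi^*$.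
   Context: Model (monopoly): a single ride-hailing platform receives passengers as a Poisson process of rate $\Lambda/2$. Drivers arrive as a Poisson process of rate $\eta$ and wait in an FCFS queue. When a passenger arrives and at least one driver waits, the passenger is quoted the static price $\phi\in[0,\phi_h]$ and accepts with probability $f(\phi)$ (then immediately starting a ride with the head-of-line driver); otherwise the passenger is lost. Each waiting driver abandons independently after an exponential time of rate $\beta$; rides and post-abandonment breaks last exponential times of rate $\nu$, after which the driver rejoins the waiting queue with probability $p\in[0,1)$ and leaves otherwise. Here $e=\eta/(1-p)$. $\mathcal D(\phi;\beta)$ is the stationary probability that no driver is waiting and $\mathcal M(\phi;\beta)$ is the long-run rate of revenue (sum of accepted prices per unit time). $\tilde{\mathcal M}$ is the limit of $\mathcal M(\cdot;\beta)$ as $\beta\to 0$. *)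

From Stdlib Require Import Reals Lra.
From Coquelicot Require Import Coquelicot.
Open Scope R_scope.

Definition in_I (a b x : R) : Prop := a <= x <= b.

Definition strictly_concave_on (f : R -> R) (a b : R) : Prop :=
  forall x y t, in_I a b x -> in_I a b y -> x <> y -> 0 < t < 1 ->
    t * f x + (1 - t) * f y < f (t * x + (1 - t) * y).

Definition strictly_decreasing_on (f : R -> R) (a b : R) : Prop :=
  forall x y, in_I a b x -> in_I a b y -> x < y -> f y < f x.

Definition differentiable_on (f : R -> R) (a b : R) : Prop :=
  forall x, in_I a b x -> exists l : R,
    forall eps, 0 < eps -> exists delta, 0 < delta /\
      forall y, in_I a b y -> y <> x -> Rabs (y - x) < delta ->
        Rabs ((f y - f x) / (y - x) - l) < eps.

Definition is_argmax (g : R -> R) (a b x : R) : Prop :=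
  in_I a b x /\ forall y, in_I a b y -> g y <= g x.

Definition Mtilde (Lam e : R) (f : R -> R) (phi : R) : R :=
  if Rlt_dec (e / ((Lam / 2) * f phi)) 1 then e * phi
  else (Lam / 2) * f phi * phi.

Fixpoint rate_prod (c beta : R) (n : nat) : R :=
  match n with
  | O => 1
  | S m => rate_prod c beta m * (c + INR (S m) * beta)
  end.

Definition Dprob (Lam e : R) (f : R -> R) (phi beta : R) : R :=
  / Series (fun n => e ^ n / rate_prod ((Lam / 2) * f phi) beta n).

Definition Mrev (Lam e : R) (f : R -> R) (phi beta : R) : R :=
  (Lam / 2) * f phi * phi * (1 - Dprob Lam e f phi beta).

From Stdlib Require Import Reals Lra Lia.
From Coquelicot Require Import Coquelicot.
Open Scope R_scope.

(* Since f is decreasing and concave, f(φ)φ is strictly concave, and as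
   (Λ/2) f(φ_l) = e, the limit revenue M̃ is e φ below φ_l and (Λ/2) f(φ)φ above:
   it strictly increases up to φ* = max(φ_fp, φ_l) and strictly decreases after.
   For β > 0, M(·;β) ≤ M̃, because D ≥ 0 and, when e < c = (Λ/2) f(φ), the series
   defining 1/D is dominated by the geometric series of ratio e/c. At φ* we have
   c ≤ e, so as β → 0 the terms tend to (e/c)^n ≥ 1 and D(φ*;β) → 0. Hence for
   maximizers ψ_n of M(·;β_n) we get M̃(ψ_n) ≥ M(ψ_n;β_n) ≥ M(φ*;β_n), whose
   limit is the peak value of M̃; a strict peak on a compact interval attracts
   such a sequence, so the whole sequence ψ_n converges to φ*. *)

Definition peak_on (F : R -> R) (a b m : R) : Prop :=
  in_I a b m /\
  forall x y, in_I a b x -> in_I a b y -> (x < y <= m \/ m <= y < x) -> F x < F y.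

Lemma peak_on_lt (F : R -> R) (a b m x : R) :
  peak_on F a b m -> in_I a b x -> x <> m -> F x < F m.
Proof.
  intros [Hm Hpeak] Hx Hxm.
  apply Hpeak; auto.
  destruct (Rlt_le_dec x m); [left | right]; lra.
Qed.

Lemma peak_on_opp (F : R -> R) (a b m : R) :
  peak_on F a b m -> peak_on (fun x => F (- x)) (- b) (- a) (- m).
Proof.
  intros [Hm Hpeak]. split; [unfold in_I in *; lra |].
  intros x y Hx Hy Hxy. unfold in_I in *.
  apply Hpeak; unfold in_I; [lra | lra |].
  destruct Hxy; [right | left]; lra.
Qed.

Lemma peak_on_gap_left (F : R -> R) (a b m eps : R) :
  peak_on F a b m -> 0 < eps ->
  exists d, 0 < d /\ forall x, in_I a b x -> x <= m - eps -> F x <= F m - d.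
Proof.
  intros HF Heps. pose proof HF as [Hm Hpeak]. unfold in_I in *.
  destruct (Rle_lt_dec a (m - eps)) as [Hin | Hout].
  - assert (Hp : in_I a b (m - eps)) by (unfold in_I; lra).
    assert (F (m - eps) < F m) by (apply (peak_on_lt F a b m); auto; lra).
    exists (F m - F (m - eps)). split; [lra |].
    intros x Hx Hxp. destruct (Req_dec x (m - eps)) as [-> | Hne]; [lra |].
    assert (F x < F (m - eps)) by (apply Hpeak; auto; lra). lra.
  - exists 1. split; [lra |]. intros x Hx Hxp. lra.
Qed.

Lemma peak_on_gap (F : R -> R) (a b m eps : R) :
  peak_on F a b m -> 0 < eps ->
  exists d, 0 < d /\ forall x, in_I a b x -> eps <= Rabs (x - m) -> F x <= F m - d.
Proof.
  intros HF Heps.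
  destruct (peak_on_gap_left F a b m eps HF Heps) as [d1 [Hd1 Hleft]].
  destruct (peak_on_gap_left _ _ _ _ eps (peak_on_opp F a b m HF) Heps)
    as [d2 [Hd2 Hright]].
  exists (Rmin d1 d2). split; [now apply Rmin_pos |].
  pose proof (Rmin_l d1 d2). pose proof (Rmin_r d1 d2).
  intros x Hx Hfar. unfold Rabs in Hfar. destruct (Rcase_abs (x - m)).
  - pose proof (Hleft x Hx ltac:(lra)). lra.
  - assert (Hopp : in_I (- b) (- a) (- x)) by (unfold in_I in *; lra).
    pose proof (Hright (- x) Hopp ltac:(lra)) as Hopp_gap.
    rewrite !Ropp_involutive in Hopp_gap. lra.
Qed.

Lemma peak_on_attracts (F : R -> R) (a b m : R) (x L : nat -> R) :
  peak_on F a b m -> (forall n, in_I a b (x n)) -> (forall n, L n <= F (x n)) ->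
  is_lim_seq L (F m) -> is_lim_seq x m.
Proof.
  intros HF Hx HLF HL. apply is_lim_seq_spec. intros eps.
  destruct (peak_on_gap F a b m eps HF (cond_pos eps)) as [d [Hd Hgap]].
  apply is_lim_seq_spec in HL. destruct (HL (mkposreal d Hd)) as [N HN].
  exists N. intros n Hn. specialize (HN n Hn). simpl in HN. apply Rabs_def2 in HN.
  destruct (Rlt_le_dec (Rabs (x n - m)) eps) as [Hnear | Hfar]; [exact Hnear |].
  pose proof (Hgap (x n) (Hx n) Hfar). pose proof (HLF n). lra.
Qed.

Lemma strictly_concave_lt_between (g : R -> R) (a b x y z : R) :
  strictly_concave_on g a b -> in_I a b x -> in_I a b z -> g x <= g z ->
  (x < y < z \/ z < y < x) -> g x < g y.
Proof.
  intros Hg Hx Hz Hxz Hy.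
  assert (Hne : x <> z) by (destruct Hy; lra).
  set (t := (z - y) / (z - x)).
  assert (Ht_def : t * (z - x) = z - y) by (unfold t; field; lra).
  assert (Ht : 0 < t < 1) by (destruct Hy; split; nra).
  assert (Hy_comb : t * x + (1 - t) * z = y) by (unfold t; field; lra).
  pose proof (Hg x z t Hx Hz Hne Ht) as Hconc. rewrite Hy_comb in Hconc.
  nra.
Qed.

Lemma strictly_concave_argmax_peak (g : R -> R) (a b m : R) :
  strictly_concave_on g a b -> is_argmax g a b m -> peak_on g a b m.
Proof.
  intros Hg [Hm Hmax]. split; [exact Hm |].
  intros x y Hx Hy Hxy.
  destruct (Req_dec y m) as [-> | Hym].
  - set (w := (x + m) / 2).
    assert (Hw : in_I a b w) by (unfold w, in_I in *; lra).
    assert (g x < g w)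
      by (apply (strictly_concave_lt_between g a b x w m); auto; unfold w; lra).
    pose proof (Hmax w Hw). lra.
  - apply (strictly_concave_lt_between g a b x y m); auto; lra.
Qed.

Lemma strictly_concave_mul_id (f : R -> R) (a b : R) :
  0 <= a -> strictly_concave_on f a b -> strictly_decreasing_on f a b ->
  strictly_concave_on (fun p => f p * p) a b.
Proof.
  intros Ha Hconc Hdec x y t Hx Hy Hxy Ht.
  pose proof (Hconc x y t Hx Hy Hxy Ht) as Hf.
  unfold in_I in *. set (m := t * x + (1 - t) * y) in *.
  assert (Hm : 0 < m) by (unfold m; destruct (Rlt_le_dec 0 x); nra).
  assert (Hanti : (f x - f y) * (x - y) <= 0).
  { destruct (Rlt_le_dec x y).
    - assert (f y < f x) by (apply Hdec; unfold in_I; lra). nra.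
    - assert (f x < f y) by (apply Hdec; unfold in_I; lra). nra. }
  assert (Hexpand : (t * f x + (1 - t) * f y) * m
     = t * (f x * x) + (1 - t) * (f y * y) - t * (1 - t) * ((f x - f y) * (x - y)))
    by (unfold m; ring).
  assert (0 <= t * (1 - t)) by nra.
  nra.
Qed.

Lemma sum_n_le_Series (a : nat -> R) (N : nat) :
  (forall n, 0 <= a n) -> ex_series a -> sum_n a N <= Series a.
Proof.
  intros Ha Hex.
  apply (is_lim_seq_incr_compare (sum_n a)); [exact (Series_correct a Hex) |].
  intro n. rewrite sum_Sn. unfold plus; simpl. pose proof (Ha (S n)). lra.
Qed.

(* [Series] returns the junk value 0 on a divergent series. *)
Lemma Series_not_ex_series (a : nat -> R) :
  (forall n, 0 <= a n) -> ~ ex_series a -> Series a = 0.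
Proof.
  intros Ha Hnex.
  assert (Hincr : forall n, sum_n a n <= sum_n a (S n)).
  { intro n. rewrite sum_Sn. unfold plus; simpl. pose proof (Ha (S n)). lra. }
  pose proof (Lim_seq_correct _ (ex_lim_seq_incr _ Hincr)) as Hlim.
  unfold Series. destruct (Lim_seq (sum_n a)) as [l | |]; try reflexivity.
  exfalso. apply Hnex. exists l. exact Hlim.
Qed.

Lemma inv_Series_nonneg (a : nat -> R) :
  (forall n, 0 <= a n) -> 0 <= / Series a.
Proof.
  intros Ha. destruct (ex_series_dec a) as [Hex | Hnex].
  - pose proof (sum_n_le_Series a 0 Ha Hex) as Hge. rewrite sum_O in Hge.
    pose proof (Ha 0%nat).
    destruct (Req_dec (Series a) 0) as [-> | Hne]; [rewrite Rinv_0; lra |].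
    left. apply Rinv_0_lt_compat. lra.
  - rewrite (Series_not_ex_series a Ha Hnex), Rinv_0. lra.
Qed.

Lemma inv_Series_le_inv_sum_n (a : nat -> R) (N : nat) :
  (forall n, 0 <= a n) -> 0 < sum_n a N -> / Series a <= / sum_n a N.
Proof.
  intros Ha Hpos. destruct (ex_series_dec a) as [Hex | Hnex].
  - apply Rinv_le_contravar; [exact Hpos | exact (sum_n_le_Series a N Ha Hex)].
  - rewrite (Series_not_ex_series a Ha Hnex), Rinv_0.
    left. apply Rinv_0_lt_compat. exact Hpos.
Qed.

(* The empty-queue probability of the birth-death chain with arrival rate [e],
   matching rate [c] and per-driver abandonment rate [b]; [Dprob Lam e f phi b]
   is [idle_prob e (Lam / 2 * f phi) b] by conversion. *)
Definition idle_prob (e c b : R) : R := / Series (fun n => e ^ n / rate_prod c b n).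

Lemma pow_le_rate_prod (c b : R) (n : nat) :
  0 <= c -> 0 <= b -> c ^ n <= rate_prod c b n.
Proof.
  intros Hc Hb. induction n as [| n IH]; cbn [rate_prod pow]; [lra |].
  pose proof (pos_INR (S n)). pose proof (pow_le c n Hc).
  rewrite Rmult_comm. apply Rmult_le_compat; nra.
Qed.

Lemma rate_prod_pos (c b : R) (n : nat) : 0 < c -> 0 <= b -> 0 < rate_prod c b n.
Proof.
  intros Hc Hb. pose proof (pow_lt c n Hc). pose proof (pow_le_rate_prod c b n). lra.
Qed.

Lemma is_lim_seq_rate_prod (c : R) (b : nat -> R) (n : nat) :
  is_lim_seq b 0 -> is_lim_seq (fun k => rate_prod c (b k) n) (c ^ n).
Proof.
  intros Hb. induction n as [| n IH]; cbn [rate_prod pow]; [apply is_lim_seq_const |].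
  replace (c * c ^ n) with (c ^ n * (c + INR (S n) * 0)) by ring.
  apply (is_lim_seq_mult' _ _ _ _ IH), is_lim_seq_plus'; [apply is_lim_seq_const |].
  apply is_lim_seq_mult'; [apply is_lim_seq_const | exact Hb].
Qed.

Section IdleProbability.

Variables e c : R.
Hypotheses (He : 0 < e) (Hc : 0 < c).

Lemma queue_term_nonneg (b : R) (n : nat) : 0 <= b -> 0 <= e ^ n / rate_prod c b n.
Proof.
  intros Hb. apply Rle_mult_inv_pos; [apply pow_le; lra | now apply rate_prod_pos].
Qed.

Lemma idle_prob_nonneg (b : R) : 0 <= b -> 0 <= idle_prob e c b.
Proof. intros Hb. apply inv_Series_nonneg. intro n. now apply queue_term_nonneg. Qed.

(* Comparison with the geometric series of ratio [e / c]. *)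
Lemma idle_prob_ge (b : R) : e < c -> 0 <= b -> 1 - e / c <= idle_prob e c b.
Proof.
  intros Hec Hb. unfold idle_prob.
  set (a := fun n => e ^ n / rate_prod c b n).
  set (q := e / c).
  assert (Hq : 0 < q < 1)
    by (unfold q; split; [apply Rdiv_lt_0_compat | apply (Rdiv_lt_1 e c Hc)]; lra).
  assert (Ha_geom : forall n, 0 <= a n <= q ^ n).
  { intro n. split; [now apply queue_term_nonneg |].
    unfold a, q, Rdiv. rewrite Rpow_mult_distr, pow_inv.
    apply Rmult_le_compat_l; [apply pow_le; lra |].
    apply Rinv_le_contravar; [now apply pow_lt | now apply pow_le_rate_prod; lra]. }
  assert (Hgeom := is_series_geom q ltac:(rewrite Rabs_pos_eq; lra)).
  assert (Hex : ex_series a).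
  { apply (ex_series_le a (fun n => q ^ n)); [| eexists; exact Hgeom].
    intro n. change (norm (a n)) with (Rabs (a n)).
    rewrite Rabs_pos_eq; apply Ha_geom. }
  assert (Hub : Series a <= / (1 - q)).
  { rewrite <- (is_series_unique _ _ Hgeom).
    apply Series_le; [exact Ha_geom | eexists; exact Hgeom]. }
  assert (Hlb : 1 <= Series a).
  { pose proof (sum_n_le_Series a 0 (fun n => proj1 (Ha_geom n)) Hex) as H0.
    rewrite sum_O in H0. replace (a 0%nat) with 1 in H0 by (unfold a; simpl; field). lra. }
  apply Rinv_le_contravar in Hub; [| lra]. rewrite Rinv_inv in Hub. lra.
Qed.

(* When [c <= e] the limiting terms [(e / c) ^ n] are at least 1, so the partial
   sums of the series grow without bound as the abandonment rate vanishes. *)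
Lemma idle_prob_vanishes (b : nat -> R) :
  c <= e -> (forall k, 0 <= b k) -> is_lim_seq b 0 ->
  is_lim_seq (fun k => idle_prob e c (b k)) 0.
Proof.
  intros Hce Hb Hlim.
  set (a := fun k n => e ^ n / rate_prod c (b k) n).
  set (r := fun n => e ^ n / c ^ n).
  assert (Hterm : forall n, is_lim_seq (fun k => a k n) (r n)).
  { intro n. apply is_lim_seq_div';
      [apply is_lim_seq_const | now apply is_lim_seq_rate_prod | apply pow_nonzero; lra]. }
  assert (Hsum : forall N, is_lim_seq (fun k => sum_n (a k) N) (sum_n r N)).
  { induction N as [| N IH].
    - apply (is_lim_seq_ext (fun k => a k 0%nat)); [intro k; now rewrite sum_O |].
      rewrite sum_O. apply Hterm.
    - apply (is_lim_seq_ext (fun k => sum_n (a k) N + a k (S N)));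
        [intro k; now rewrite sum_Sn |].
      rewrite sum_Sn. now apply is_lim_seq_plus'. }
  assert (Hsum_ge : forall N, INR N + 1 <= sum_n r N).
  { assert (Hr : forall n, 1 <= r n).
    { intro n. unfold r. pose proof (pow_lt c n Hc).
      apply (Rmult_le_reg_r (c ^ n)); [lra |].
      unfold Rdiv. rewrite Rmult_assoc, Rinv_l, Rmult_1_l, Rmult_1_r by lra.
      apply pow_incr. lra. }
    induction N as [| N IH].
    - rewrite sum_O. simpl. pose proof (Hr 0%nat). lra.
    - rewrite sum_Sn, S_INR. unfold plus; simpl. pose proof (Hr (S N)). lra. }
  apply is_lim_seq_spec. intro eps.
  destruct (archimed_cor1 eps (cond_pos eps)) as [N [HN HN0]].
  pose proof (lt_0_INR N ltac:(lia)).
  pose proof (Hsum N) as HsumN. apply is_lim_seq_spec in HsumN.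
  destruct (HsumN (mkposreal 1 Rlt_0_1)) as [K HK].
  exists K. intros k Hk. specialize (HK k Hk). simpl in HK. apply Rabs_def2 in HK.
  pose proof (Hsum_ge N).
  assert (Hak : forall n, 0 <= a k n) by (intro n; now apply queue_term_nonneg).
  pose proof (inv_Series_le_inv_sum_n (a k) N Hak ltac:(lra)) as Hle.
  pose proof (Rinv_le_contravar (INR N) (sum_n (a k) N) ltac:(lra) ltac:(lra)).
  pose proof (idle_prob_nonneg (b k) (Hb k)).
  change (/ Series (a k)) with (idle_prob e c (b k)) in Hle.
  rewrite Rminus_0_r, Rabs_pos_eq by lra. lra.
Qed.

End IdleProbability.

Section LimitRevenue.

Variables (Lam e phih : R) (f : R -> R) (phil phifp : R).
Hypotheses (hLam : 0 < Lam) (he : 0 < e)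
  (hfpos : forall x, in_I 0 phih x -> 0 < f x)
  (hconc : strictly_concave_on f 0 phih)
  (hdec : strictly_decreasing_on f 0 phih)
  (hphil : in_I 0 phih phil) (hfphil : f phil = 2 * e / Lam)
  (hphifp : is_argmax (fun phi => f phi * phi) 0 phih phifp).

Lemma rate_at_phil : Lam / 2 * f phil = e.
Proof. rewrite hfphil. field. lra. Qed.

Lemma Mtilde_below (phi : R) :
  in_I 0 phih phi -> phi < phil -> Mtilde Lam e f phi = e * phi.
Proof.
  intros Hphi Hlt. unfold Mtilde.
  destruct (Rlt_dec (e / (Lam / 2 * f phi)) 1) as [_ | Hnot]; [reflexivity |].
  exfalso. apply Hnot.
  pose proof (hdec phi phil Hphi hphil Hlt). pose proof (hfpos phi Hphi).
  pose proof rate_at_phil.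
  apply (Rdiv_lt_1 e (Lam / 2 * f phi)); nra.
Qed.

Lemma Mtilde_above (phi : R) :
  in_I 0 phih phi -> phil <= phi -> Mtilde Lam e f phi = Lam / 2 * (f phi * phi).
Proof.
  intros Hphi Hle. unfold Mtilde.
  destruct (Rlt_dec (e / (Lam / 2 * f phi)) 1) as [Hlt | _]; [exfalso | ring].
  assert (f phi <= f phil).
  { destruct (Req_dec phil phi) as [-> | Hne]; [lra |].
    left. apply hdec; auto; lra. }
  pose proof (hfpos phi Hphi). pose proof rate_at_phil.
  apply (Rdiv_lt_1 e (Lam / 2 * f phi)) in Hlt; nra.
Qed.

Lemma Mtilde_peak : peak_on (Mtilde Lam e f) 0 phih (Rmax phifp phil).
Proof.
  pose proof (strictly_concave_argmax_peak _ _ _ _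
    (strictly_concave_mul_id f 0 phih (Rle_refl 0) hconc hdec) hphifp) as Hg.
  pose proof Hg as [Hphifp Hgpeak].
  pose proof rate_at_phil.
  split.
  { unfold Rmax, in_I in *. destruct (Rle_dec phifp phil); lra. }
  intros x y Hx Hy [[Hxy Hyl] | [Hly Hyx]].
  - destruct (Rlt_le_dec x phil) as [Hxl | Hlx].
    + rewrite (Mtilde_below x Hx Hxl).
      destruct (Rlt_le_dec y phil) as [Hyl' | Hly].
      * rewrite (Mtilde_below y Hy Hyl'). nra.
      * rewrite (Mtilde_above y Hy Hly).
        assert (f phil * phil <= f y * y).
        { destruct (Req_dec phil y) as [-> | Hne]; [lra |].
          left. apply Hgpeak; auto. apply Rmax_Rle in Hyl. lra. }
        nra.
    + rewrite (Mtilde_above x Hx Hlx), (Mtilde_above y Hy ltac:(lra)).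
      assert (f x * x < f y * y) by (apply Hgpeak; auto; apply Rmax_Rle in Hyl; lra).
      nra.
  - pose proof (Rmax_l phifp phil). pose proof (Rmax_r phifp phil).
    rewrite (Mtilde_above x Hx ltac:(lra)), (Mtilde_above y Hy ltac:(lra)).
    assert (f x * x < f y * y) by (apply Hgpeak; auto; lra).
    nra.
Qed.

Lemma Mrev_le_Mtilde (phi b : R) :
  in_I 0 phih phi -> 0 < b -> Mrev Lam e f phi b <= Mtilde Lam e f phi.
Proof.
  intros Hphi Hb. unfold Mrev.
  change (Dprob Lam e f phi b) with (idle_prob e (Lam / 2 * f phi) b).
  pose proof (hfpos phi Hphi). pose proof rate_at_phil.
  assert (Hc : 0 < Lam / 2 * f phi) by nra.
  assert (Hw : 0 <= Lam / 2 * f phi * phi) by (unfold in_I in Hphi; nra).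
  destruct (Rlt_le_dec phi phil) as [Hlt | Hle].
  - rewrite (Mtilde_below phi Hphi Hlt).
    assert (He_c : e < Lam / 2 * f phi) by (pose proof (hdec phi phil Hphi hphil Hlt); nra).
    pose proof (idle_prob_ge e _ he Hc b He_c ltac:(lra)) as HD.
    replace (e * phi) with (Lam / 2 * f phi * phi * (e / (Lam / 2 * f phi))) by (field; lra).
    apply Rmult_le_compat_l; lra.
  - rewrite (Mtilde_above phi Hphi Hle).
    pose proof (idle_prob_nonneg e _ he Hc b ltac:(lra)).
    nra.
Qed.

Lemma is_lim_seq_Mrev (phi : R) (beta : nat -> R) :
  in_I 0 phih phi -> phil <= phi -> (forall n, 0 < beta n) -> is_lim_seq beta 0 ->
  is_lim_seq (fun n => Mrev Lam e f phi (beta n)) (Mtilde Lam e f phi).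
Proof.
  intros Hphi Hle Hbeta Hlim.
  assert (Hc_e : Lam / 2 * f phi <= e).
  { rewrite <- rate_at_phil. apply Rmult_le_compat_l; [lra |].
    destruct (Req_dec phil phi) as [-> | Hne]; [lra |].
    left. apply hdec; auto; lra. }
  pose proof (hfpos phi Hphi).
  pose proof (idle_prob_vanishes e (Lam / 2 * f phi) he ltac:(nra) beta Hc_e
    (fun n => Rlt_le _ _ (Hbeta n)) Hlim) as HD.
  rewrite (Mtilde_above phi Hphi Hle).
  replace (Lam / 2 * (f phi * phi)) with (Lam / 2 * f phi * phi * (1 - 0)) by ring.
  apply is_lim_seq_mult'; [apply is_lim_seq_const |].
  apply is_lim_seq_minus'; [apply is_lim_seq_const | exact HD].
Qed.

End LimitRevenue.

Theorem theorem1
  (Lam e phih : R) (f : R -> R)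
  (hLam : 0 < Lam) (he : 0 < e) (hphih : 0 < phih)
  (hfrange : forall x, in_I 0 phih x -> 0 < f x <= 1)
  (hconc : strictly_concave_on f 0 phih)
  (hdec : strictly_decreasing_on f 0 phih)
  (hdiff : differentiable_on f 0 phih)
  (hf0 : f 0 = 1)
  (phil : R) (hphil : in_I 0 phih phil) (hfphil : f phil = 2 * e / Lam)
  (phifp : R) (hphifp : is_argmax (fun phi => f phi * phi) 0 phih phifp) :
  let phistar := Rmax phifp phil in
  (in_I 0 phih phistar /\
   forall phi, in_I 0 phih phi -> phi <> phistar ->
     Mtilde Lam e f phi < Mtilde Lam e f phistar) /\
  (forall (beta : nat -> R) (phis : nat -> R),
     (forall n, 0 < beta n) ->
     (forall n, beta (S n) <= beta n) ->
     is_lim_seq beta 0 ->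
     (forall n, is_argmax (fun phi => Mrev Lam e f phi (beta n)) 0 phih (phis n)) ->
     exists sigma : nat -> nat,
       (forall k, (sigma k < sigma (S k))%nat) /\
       is_lim_seq (fun k => phis (sigma k)) phistar).
Proof.
  intros phistar.
  assert (hfpos : forall x, in_I 0 phih x -> 0 < f x) by (intros x Hx; apply hfrange, Hx).
  pose proof (Mtilde_peak Lam e phih f phil phifp hLam he hfpos hconc hdec hphil hfphil
    hphifp) as Hpeak.
  fold phistar in Hpeak.
  split.
  { split; [apply Hpeak |]. intros phi Hphi Hne. now apply (peak_on_lt _ 0 phih). }
  intros beta phis Hbeta _ Hlim Hmax.
  exists (fun k => k). split; [intro k; lia |].
  apply (peak_on_attracts (Mtilde Lam e f) 0 phih phistar phis
           (fun n => Mrev Lam e f phistar (beta n)) Hpeak).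
  - intro n. apply Hmax.
  - intro n. destruct (Hmax n) as [Hphis Hbest].
    eapply Rle_trans; [apply (Hbest phistar), Hpeak |].
    now apply (Mrev_le_Mtilde Lam e phih f phil).
  - apply (is_lim_seq_Mrev Lam e phih f phil); auto; [apply Hpeak | apply Rmax_r].
Qed.
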